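(* Consider $N$ agents, all of whose neighborhoods are $\mathcal{N}(i)=\{1,\dots,N\}$ (fully connected debate graph), on a probability space with sub-$\sigma$-algebras $\mathcal{F}_{t-1}$. At round $t-1$ each agent $j$ emits random variables $y_{j,t-1}\in\{1,\dots,K\}$ and $w_{j,t-1}\in(0,1]$. Let $p_{j,t-1}=\Pr(y_{j,t-1}=1\mid\mathcal{F}_{t-1})$, $\rho_{j,t-1}=\mathbb{E}[w_{j,t-1}\mathbf{1}\{y_{j,t-1}=1\}\mid\mathcal{F}_{t-1}]/\mathbb{E}[w_{j,t-1}\mid\mathcal{F}_{t-1}]$, and $$q_{i,t-1}=\frac{\mathbb{E}\big[\sum_{j}w_{j,t-1}\mathbf{1}\{y_{j,t-1}=1\}\mid\mathcal{F}_{t-1}\big]}{\mathbb{E}\big[\sum_j w_{j,t-1}\mid\mathcal{F}_{t-1}\big]}.$$ Assume confidence is positively correlated with correctness: $\rho_{j,t-1}\ge p_{j,t-1}$ almost surely for all $j,t$, with strict inequality on a set of positive probability for at least one agent and round. Assume homogeneity: $p_{j,t-1}=p_{i,t-1}$ for all $j$. Then $q_{i,t-1}\ge p_{i,t-1}$, with strict inequality on a set of positive probability.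
   Context: Option $1$ is the unique correct answer; $\mathcal{F}_{t-1}$ is the debate history up to round $t-1$; $w_{j,t-1}$ is agent $j$'s expressed confidence and $p_{j,t-1}$ its probability of answering correctly. *)

From HB Require Import structures.
From mathcomp Require Import all_boot all_order all_algebra.
From mathcomp Require Import all_classical all_reals all_analysis.
Set Implicit Arguments. Unset Strict Implicit. Unset Printing Implicit Defensive.
Import Order.TTheory GRing.Theory Num.Theory.
Local Open Scope classical_set_scope.
Local Open Scope ring_scope.

Section defs.
Context (d : measure_display) (T : measurableType d) (R : realType).

Definition is_sub_sigma_algebra (G : set (set T)) : Prop :=
  sigma_algebra setT G /\ (forall A, G A -> measurable A).

Definition G_measurable (G : set (set T)) (Y : T -> R) : Prop :=
  forall B : set R, measurable B -> G (Y @^-1` B).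

(* Y is a version of the conditional expectation E[X | G] under P:
   Y is G-measurable, integrable, and has the same integral as X over every
   G-set (X is assumed integrable separately). *)
Definition cond_exp (P : probability T R) (G : set (set T)) (X Y : T -> R) : Prop :=
  [/\ G_measurable G Y,
      P.-integrable setT (EFin \o Y) &
      forall A, G A -> (\int[P]_(x in A) (Y x)%:E = \int[P]_(x in A) (X x)%:E)%E].

(* Indicator of the event {y = 1} (option 1 is the correct answer). *)
Definition ind1 (y : T -> nat) : T -> R := fun x => ((y x == 1%N) : nat)%:R.

End defs.
Arguments ind1 {d T R} y x.

From HB Require Import structures.
From mathcomp Require Import all_boot all_order all_algebra.
From mathcomp Require Import all_classical all_reals all_analysis.
From mathcomp Require Import measurable_realfun.
Import Order.TTheory GRing.Theory Num.Theory.
Local Open Scope classical_set_scope.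
Local Open Scope ring_scope.

(* Conditional expectation is additive on nonnegative variables and maps
   positive variables to a.s. positive ones, so almost surely
   [Qnum = \sum_j num_j] and [Qden = \sum_j den_j] with every [den_j > 0].
   By homogeneity and positive correlation [p * den_j <= num_j] for all [j];
   summing over [j] gives [p <= Qnum / Qden], strictly wherever a single
   agent's inequality is strict. Hence, up to a null set, the event where
   agent [j0] is strictly positively correlated is contained in the event
   [p < q], which therefore has positive probability. *)

Lemma measurable_inv (R : realType) : measurable_fun [set: R] (GRing.inv : R -> R).
Proof.
rewrite -(setUv [set 0 : R]); apply/measurable_funU => //; first exact: measurableC.
split.
  apply: (eq_measurable_fun (cst (0 : R))); last exact: measurable_cst.
  by move=> x; rewrite inE /= => ->; rewrite invr0.
apply: open_continuous_measurable_fun; first exact/closed_openC/closed_eq.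
by move=> x; rewrite inE /= => /eqP x0; exact: inv_continuous.
Qed.

Section measure_lemmas.
Context {d : measure_display} {T : measurableType d} {R : realType}
  (mu : measure T R).

Lemma measurable_lt_div (f g h : T -> R) :
  measurable_fun setT f -> measurable_fun setT g -> measurable_fun setT h ->
  measurable [set x | f x < g x / h x].
Proof.
move=> mf mg mh.
have mgh : measurable_fun setT (fun x => g x / h x - f x).
  by apply: measurable_funB => //; apply: measurable_funM => //;
    exact: measurableT_comp (measurable_inv R) mh.
have -> : [set x | f x < g x / h x] = (fun x => g x / h x - f x) @^-1` `]0, +oo[.
  by apply/seteqP; split => x /=; rewrite in_itv /= andbT subr_gt0.
by rewrite -[_ @^-1` _]setTI; exact: mgh.
Qed.

Lemma le_measure_ae (A B : set T) : measurable A -> measurable B ->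
  {ae mu, forall x, A x -> B x} -> (mu A <= mu B)%E.
Proof.
move=> mA mB [N [mN N0 ABN]].
have AB : A `<=` B `|` N.
  move=> x Ax; have [Bx|nBx] := pselect (B x); first by left.
  by right; apply: ABN => /(_ Ax).
apply: le_trans (le_measure mu (mem_set mA) (mem_set (measurableU _ _ mB mN)) AB) _.
apply: le_trans (measureU2 mu mB mN) _; rewrite -[leRHS]adde0; apply: leeD => //.
by rewrite -N0.
Qed.

Lemma gt0_integral_le0_null {A : set T} (f : T -> R) :
  measurable A -> measurable_fun A f -> (forall x, A x -> 0 < f x) ->
  (\int[mu]_(x in A) (f x)%:E <= 0)%E -> mu A = 0%E.
Proof.
move=> mA mf f_gt0 int_le0.
have : (\int[mu]_(x in A) `|(f x)%:E| = 0)%E.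
  rewrite (eq_integral (fun x => (f x)%:E)); last first.
    by move=> x /[!inE] Ax; rewrite gee0_abs // lee_fin ltW // f_gt0.
  apply/eqP; rewrite eq_le int_le0 /=; apply: integral_ge0 => x Ax.
  by rewrite lee_fin ltW // f_gt0.
move/(ae_eq_integral_abs mu mA ((measurable_EFinP _ _).2 mf)) => [N [mN N0 AN]].
apply/eqP; rewrite eq_le measure_ge0 andbT -N0 le_measure ?inE //.
by move=> x Ax; apply: AN => /= /(_ Ax) [] /eqP; rewrite gt_eqF // f_gt0.
Qed.

End measure_lemmas.

Lemma measurable_ind1 d (T : measurableType d) (R : realType) (y : T -> nat) :
  measurable (y @^-1` [set 1%N]) -> measurable_fun setT (ind1 y : T -> R).
Proof.
have -> : ind1 y = \1_(y @^-1` [set 1%N]) :> (T -> R).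
  apply/funext => x; rewrite /ind1 indicE.
  by have [y1|/eqP y1] := eqVneq (y x) 1%N; [rewrite mem_set | rewrite memNset].
exact: measurable_indic.
Qed.

Section conditional_expectation.
Context {d : measure_display} {T : measurableType d} {R : realType}
  {P : probability T R} {G : set (set T)}.
Hypothesis subG : is_sub_sigma_algebra G.

Lemma sub_sigma_measurable {A : set T} : G A -> measurable A.
Proof. by case: subG => _; apply. Qed.

Lemma G_measurableP (Y : T -> R) :
  G_measurable G Y <-> measurable_fun (T := g_sigma_algebraType G) setT Y.
Proof.
have GE : <<s G >> = G by case: subG => sG _; exact: smallest_id.
split=> [GY _ B mB | mY B mB].
  by rewrite setTI /measurable /= GE; exact: GY.
by have := mY measurableT B mB; rewrite setTI /measurable /= GE.
Qed.

Lemma G_measurable_fun {Y : T -> R} : G_measurable G Y -> measurable_fun setT Y.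
Proof. by move=> GY _ B mB; rewrite setTI; exact/sub_sigma_measurable/GY. Qed.

Lemma G_measurable_lt {Y Z : T -> R} : G_measurable G Y -> G_measurable G Z ->
  G [set x | Z x < Y x].
Proof.
move=> /G_measurableP mY /G_measurableP mZ.
have -> : [set x | Z x < Y x] = (Y \- Z) @^-1` `]0, +oo[.
  by apply/seteqP; split => x /=; rewrite in_itv /= andbT subr_gt0.
have /G_measurableP GYZ := measurable_funB mY mZ.
by apply: GYZ; exact: measurable_itv.
Qed.

Lemma G_measurable_sum {n} {Ys : 'I_n -> T -> R} :
  (forall j, G_measurable G (Ys j)) -> G_measurable G (fun x => \sum_(j < n) Ys j x).
Proof. by move=> GY; apply/G_measurableP/measurable_sum => j; exact/G_measurableP. Qed.

Lemma cond_exp_measurable {X Y : T -> R} :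
  cond_exp P G X Y -> measurable_fun setT Y.
Proof. by case=> GY _ _; exact: G_measurable_fun. Qed.

Lemma cond_exp_lt_null {X Y Z : T -> R} :
  cond_exp P G X Y -> cond_exp P G X Z -> P [set x | Z x < Y x] = 0%E.
Proof.
move=> [GY iY eY] [GZ iZ eZ].
have GA := G_measurable_lt GY GZ; have mA := sub_sigma_measurable GA.
apply: (gt0_integral_le0_null P (Y \- Z)) => //.
- apply: measurable_funS (subsetT _) _ => //.
  exact: measurable_funB (G_measurable_fun GY) (G_measurable_fun GZ).
- by move=> x; rewrite /= subr_gt0.
have iAY : P.-integrable [set x | Z x < Y x] (EFin \o Y) by exact: integrableS iY.
have iAZ : P.-integrable [set x | Z x < Y x] (EFin \o Z) by exact: integrableS iZ.
under eq_integral do rewrite EFinB.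
by rewrite integralB_EFin // eY // -eZ // subee // (integrable_fin_num mA iAZ).
Qed.

Lemma cond_exp_ae_unique {X Y Z : T -> R} :
  cond_exp P G X Y -> cond_exp P G X Z -> {ae P, forall x, Y x = Z x}.
Proof.
move=> ceY ceZ.
have null_lt U V : cond_exp P G X U -> cond_exp P G X V ->
    P.-negligible [set x | V x < U x].
  move=> ceU ceV; have [GU _ _] := ceU; have [GV _ _] := ceV.
  apply/negligibleP; first exact/sub_sigma_measurable/G_measurable_lt.
  exact: cond_exp_lt_null ceU ceV.
apply: negligibleS (negligibleU (null_lt _ _ ceY ceZ) (null_lt _ _ ceZ ceY)).
by move=> x /= /eqP; rewrite neq_lt => /orP[]; [right | left].
Qed.

Lemma cond_exp_sum {n} {Xs Ys : 'I_n -> T -> R} :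
  (forall j, measurable_fun setT (Xs j)) -> (forall j x, 0 <= Xs j x) ->
  (forall j, cond_exp P G (Xs j) (Ys j)) ->
  cond_exp P G (fun x => \sum_(j < n) Xs j x) (fun x => \sum_(j < n) Ys j x).
Proof.
move=> mX X_ge0 ceY; split.
- by apply: G_measurable_sum => j; case: (ceY j).
- rewrite (_ : EFin \o _ = fun x => \sum_(j < n) (Ys j x)%:E).
    by apply: integrable_sum => // j _; case: (ceY j).
  by apply/funext => x /=; rewrite sumEFin.
move=> A GA; have mA := sub_sigma_measurable GA.
under eq_integral do rewrite -sumEFin.
under [RHS]eq_integral do rewrite -sumEFin.
rewrite integral_sum // => [|j]; last by case: (ceY j) => _ iY _; exact: integrableS iY.
rewrite ge0_integral_sum // => [|j|j x _]; last 2 first.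
- by apply/measurable_EFinP; exact: measurable_funS measurableT (subsetT _) (mX j).
- by rewrite lee_fin.
by apply: eq_bigr => j _; case: (ceY j) => _ _ ->.
Qed.

Lemma cond_exp_gt0 {X Y : T -> R} :
  measurable_fun setT X -> (forall x, 0 < X x) -> cond_exp P G X Y ->
  {ae P, forall x, 0 < Y x}.
Proof.
move=> mX X_gt0 [GY iY eY].
have GA : G (Y @^-1` `]-oo, 0]) := GY _ (measurable_itv _).
have mA := sub_sigma_measurable GA.
exists (Y @^-1` `]-oo, 0]); split => //; last first.
  by move=> x /= /negP; rewrite in_itv /= leNgt.
apply: (gt0_integral_le0_null P X) => //.
  exact: measurable_funS measurableT (subsetT _) mX.
rewrite -eY // (eq_integral (fun x => - (- Y x)%:E)%E) => [|x _]; last first.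
  by rewrite EFinN oppeK.
have Y_le0 x : (Y @^-1` `]-oo, 0]) x -> (0 <= (- Y x)%:E)%E.
  by rewrite /= in_itv /= lee_fin oppr_ge0.
by rewrite integral_ge0N // oppe_le0; exact: integral_ge0.
Qed.

Lemma cond_exp_sum_ae {n} {Xs Ys : 'I_n -> T -> R} {Q : T -> R} :
  (forall j, measurable_fun setT (Xs j)) -> (forall j x, 0 <= Xs j x) ->
  (forall j, cond_exp P G (Xs j) (Ys j)) ->
  cond_exp P G (fun x => \sum_(j < n) Xs j x) Q ->
  {ae P, forall x, Q x = \sum_(j < n) Ys j x}.
Proof.
by move=> mX X_ge0 ceY ceQ; exact: cond_exp_ae_unique ceQ (cond_exp_sum mX X_ge0 ceY).
Qed.

End conditional_expectation.

Section mediant.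
Context (R : realFieldType) (n : nat) (num den : 'I_n -> R) (p : R).
Hypothesis den_gt0 : forall j, 0 < den j.
Hypothesis le_ratio : forall j, p <= num j / den j.

Lemma sum_den_gt0 (j0 : 'I_n) : 0 < \sum_j den j.
Proof.
rewrite (bigD1 j0) //= ltr_pwDl // sumr_ge0 // => j _; exact: ltW.
Qed.

Lemma le_mul_ratio j : p * den j <= num j.
Proof. by rewrite -ler_pdivlMr. Qed.

Lemma mediant_ge (j0 : 'I_n) : p <= (\sum_j num j) / (\sum_j den j).
Proof.
rewrite ler_pdivlMr ?(sum_den_gt0 j0) // mulr_sumr.
by apply: ler_sum => j _; exact: le_mul_ratio.
Qed.

Lemma mediant_gt (j0 : 'I_n) :
  p < num j0 / den j0 -> p < (\sum_j num j) / (\sum_j den j).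
Proof.
rewrite !ltr_pdivlMr ?(sum_den_gt0 j0) // mulr_sumr => lt_j0.
rewrite (bigD1 j0) //= [X in _ < X](bigD1 j0) //= ltr_leD //.
by apply: ler_sum => j _; exact: le_mul_ratio.
Qed.

End mediant.

(* Rounds are indexed by t : nat (t stands for the paper's round t-1);
   agents by 'I_N (fully connected graph: every neighbourhood is all of 'I_N). *)
Theorem corollary1 (R : realType) (d : measure_display) (T : measurableType d)
  (P : probability T R) (N K : nat)
  (F : nat -> set (set T))
  (y : nat -> 'I_N -> T -> nat) (w : nat -> 'I_N -> T -> R)
  (pv num den : nat -> 'I_N -> T -> R) (Qnum Qden : nat -> T -> R) :
  (forall t, is_sub_sigma_algebra (F t)) ->
  (forall t j k, measurable (y t j @^-1` [set k])) ->
  (forall t j x, (1 <= y t j x <= K)%N) ->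
  (forall t j, measurable_fun setT (w t j)) ->
  (forall t j x, 0 < w t j x <= 1) ->
  (forall t j, cond_exp P (F t) (ind1 (y t j)) (pv t j)) ->
  (forall t j, cond_exp P (F t) (fun x => w t j x * ind1 (y t j) x) (num t j)) ->
  (forall t j, cond_exp P (F t) (w t j) (den t j)) ->
  (forall t, cond_exp P (F t)
      (fun x => \sum_(j < N) w t j x * ind1 (y t j) x) (Qnum t)) ->
  (forall t, cond_exp P (F t) (fun x => \sum_(j < N) w t j x) (Qden t)) ->
  (* positive correlation: rho_{j,t} >= p_{j,t} a.s. *)
  (forall t j, {ae P, forall x, (pv t j x <= num t j x / den t j x)%R}) ->
  (* strict on a set of positive probability for some agent and round *)
  (exists t j, (0 < P [set x | (pv t j x < num t j x / den t j x)%R])%E) ->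
  (* homogeneity *)
  (forall t i j, {ae P, forall x, (pv t j x = pv t i x)%R}) ->
  forall i : 'I_N,
    (forall t, {ae P, forall x, (pv t i x <= Qnum t x / Qden t x)%R}) /\
    (exists t, (0 < P [set x | (pv t i x < Qnum t x / Qden t x)%R])%E).
Proof.
move=> HF my _ mw hw Hpv Hnum Hden HQn HQd Hcorr [t0 [j0 Hstr]] Hhom i.
have w_gt0 t j x : 0 < w t j x by case/andP: (hw t j x).
have w_ge0 t j x : 0 <= w t j x := ltW (w_gt0 t j x).
have mwy t j : measurable_fun setT (fun x => w t j x * ind1 (y t j) x).
  by apply: measurable_funM => //; exact: measurable_ind1.
have wy_ge0 t j x : 0 <= w t j x * ind1 (y t j) x := mulr_ge0 (w_ge0 t j x) (ler0n _ _).
have ce_measurable t X Y : cond_exp P (F t) X Y -> measurable_fun setT Y.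
  exact: (cond_exp_measurable (HF t)).
have good t : {ae P, forall x, [/\ Qnum t x = \sum_j num t j x,
    Qden t x = \sum_j den t j x, forall j, 0 < den t j x
    & forall j, pv t i x <= num t j x / den t j x]}.
  have Qn := cond_exp_sum_ae (HF t) (mwy t) (wy_ge0 t) (Hnum t) (HQn t).
  have Qd := cond_exp_sum_ae (HF t) (mw t) (w_ge0 t) (Hden t) (HQd t).
  have den_gt0 : {ae P, forall x, forall j, 0 < den t j x}.
    apply: filter_forall => j.
    exact: (cond_exp_gt0 (HF t) (mw t j) (w_gt0 t j) (Hden t j)).
  have corr : {ae P, forall x, forall j, pv t i x <= num t j x / den t j x}.
    by apply: filter_forall => j; apply: filterS2 (Hcorr t j) (Hhom t i j) => x + <-.
  have sums : {ae P, forall x,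
      Qnum t x = \sum_j num t j x /\ Qden t x = \sum_j den t j x}.
    by apply: filterS2 Qn Qd => x; split.
  by apply: filterS3 sums den_gt0 corr => x [? ?] ? ?; split.
split=> [t|]; first by apply: filterS (good t) => x [-> -> ? ?]; exact: mediant_ge.
exists t0; apply: lt_le_trans Hstr _; apply: le_measure_ae.
- by apply: measurable_lt_div; apply: (ce_measurable t0);
    [exact: Hpv | exact: Hnum | exact: Hden].
- by apply: measurable_lt_div; apply: (ce_measurable t0);
    [exact: Hpv | exact: HQn | exact: HQd].
apply: filterS2 (good t0) (Hhom t0 i j0) => x [Qn Qd ? ?] hom.
by rewrite /= Qn Qd hom; exact: mediant_gt.
Qed.
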